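(* For every $n\in\mathbb{N}$ let $M_n\in\mathcal{M}_n$ be fixed and let $H_n$ be a uniformly random element of $\mathcal{M}_n$. Then for every $\eta>0$, $\lim_{n\to\infty}\mathbb{P}\big(|d_M(M_n,H_n)-\mathbb{E}(d_M(M_n,H_n))|>\eta\big)=0$.
   Context: $\mathcal{M}_n$ is the set of $n\times n$ real matrices with all entries in $\{n^{-1/2},-n^{-1/2}\}$. A matrix $A$ is regarded as an operator $v\mapsto vA$ on functions on $[n]$ with the uniform probability measure. $\mathcal{S}_k(A)$ is the set of joint distributions on $\mathbb{R}^{2k}$ of $(v_1,\dots,v_k,v_1A,\dots,v_kA)$ over $v_i:[n]\to[-1,1]$; $d_M(A,B)=\sum_k2^{-k}d_H(\mathcal{S}_k(A),\mathcal{S}_k(B))$ with $d_H$ the Hausdorff distance induced by the Lévy–Prokhorov metric. *)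

From HB Require Import structures.
From mathcomp Require Import all_boot all_order all_algebra.
From mathcomp Require Import all_classical all_reals all_analysis.
Set Implicit Arguments. Unset Strict Implicit. Unset Printing Implicit Defensive.
Import Order.TTheory GRing.Theory Num.Theory.
Import numFieldNormedType.Exports.
Local Open Scope classical_set_scope.
Local Open Scope ring_scope.

Section Defs.
Variable R : realType.

Definition eucl (m : nat) (x y : 'rV[R]_m) : R :=
  Num.sqrt (\sum_(i < m) (x 0 i - y 0 i) ^+ 2).

Definition nbhd_set (m : nat) (U : set 'rV[R]_m) (e : R) : set 'rV[R]_m :=
  [set x | exists2 y, U y & eucl x y < e].

(* Law of a random point x(j), j uniform on [n]: a set function
   (the law of a finitely supported probability measure; it is defined
   on every subset of R^m). *)
Definition empirical (n m : nat) (x : 'I_n -> 'rV[R]_m) : set 'rV[R]_m -> R :=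
  fun U => #|[pred j | `[< U (x j) >] ]|%:R / n%:R.

Definition dLP (m : nat) (mu nu : set 'rV[R]_m -> R) : R :=
  inf [set e : R | 0 < e /\
        forall U : set 'rV[R]_m,
          mu U <= nu (nbhd_set U e) + e /\ nu U <= mu (nbhd_set U e) + e].

Definition dH (m : nat) (S T : set (set 'rV[R]_m -> R)) : R :=
  Num.max (sup [set inf [set dLP mu nu | nu in T] | mu in S])
          (sup [set inf [set dLP mu nu | mu in S] | nu in T]).

(* Rows of V are v_1..v_k : [n] -> [-1,1];
   the rows of V *m A are v_1 A, ..., v_k A, where (vA)(j) = sum_i v(i) A(i,j).
   The point attached to j in [n] is (v_1(j),..,v_k(j),(v_1A)(j),..,(v_kA)(j)). *)
Definition profile_pt (n k : nat) (A : 'M[R]_n) (V : 'M[R]_(k, n)) (j : 'I_n)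
  : 'rV[R]_(k + k) := row_mx (col j V)^T (col j (V *m A))^T.

Definition Sk (n : nat) (A : 'M[R]_n) (k : nat) : set (set 'rV[R]_(k + k) -> R) :=
  [set empirical (profile_pt A V) |
     V in [set V : 'M[R]_(k, n) | forall i j, -1 <= V i j <= 1]].

Definition dM (n : nat) (A B : 'M[R]_n) : R :=
  limn (series (fun k : nat =>
           (2 : R) ^- k.+1 * dH (@Sk n A k.+1) (@Sk n B k.+1))).

Definition inMn (n : nat) (A : 'M[R]_n) : Prop :=
  forall i j, A i j = (Num.sqrt n%:R)^-1 \/ A i j = - (Num.sqrt n%:R)^-1.

(* sign pattern s |-> element of M_n (a bijection onto M_n) *)
Definition signmx (n : nat) (s : 'M[bool]_n) : 'M[R]_n :=
  \matrix_(i, j) ((if s i j then 1 else -1) * (Num.sqrt n%:R)^-1).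

Definition E_dM (n : nat) (A : 'M[R]_n) : R :=
  (\sum_(s : 'M[bool]_n) dM A (signmx s)) / #|{: 'M[bool]_n}|%:R.

Definition P_dev (n : nat) (A : 'M[R]_n) (eta : R) : R :=
  #|[pred s : 'M[bool]_n | eta < `|dM A (signmx s) - E_dM A| ]|%:R
    / #|{: 'M[bool]_n}|%:R.

End Defs.

From HB Require Import structures.
From mathcomp Require Import all_boot all_order all_algebra.
From mathcomp Require Import all_classical all_reals all_analysis.
From mathcomp Require Import ring lra.
Import Order.TTheory GRing.Theory Num.Theory.
Import numFieldNormedType.Exports.
Local Open Scope classical_set_scope.
Local Open Scope ring_scope.
Set Implicit Arguments. Unset Strict Implicit. Unset Printing Implicit Defensive.

(* Changing one column j0 of H changes the profile point (v_1(j), ..., (v_k H)(j)) only at the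
   index j = j0, so every empirical law in S_k(H) moves by at most 1/n on every set, hence by at
   most 1/n in Levy-Prokhorov distance; therefore d_H(S_k(M_n), S_k(H)), and with it
   d_M(M_n, H), changes by at most 1/n.  The Efron-Stein inequality over the n independent
   columns of H bounds the variance of d_M(M_n, H_n) by n (1/n)^2 = 1/n, and Chebyshev's
   inequality gives P(|d_M - E d_M| > eta) <= 1 / (n eta^2). *)

Section UniformMean.
Variable R : realType.

Definition mean (T : finType) (f : T -> R) : R := (\sum_t f t) / #|{: T}|%:R.

Lemma sumr_cstT (T : finType) (x : R) : \sum_(t : T) x = #|{: T}|%:R * x.
Proof. by rewrite sumr_const mulr_natl. Qed.

Lemma natr_cardT_gt0 (T : finType) (t0 : T) : 0 < #|{: T}|%:R :> R.
Proof. by rewrite ltr0n; apply/card_gt0P; exists t0. Qed.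

Lemma sum_mean (T : finType) (t0 : T) (f : T -> R) :
  \sum_t f t = #|{: T}|%:R * mean f.
Proof. by rewrite /mean mulrC divfK // gt_eqF // (natr_cardT_gt0 t0). Qed.

Lemma mean_cst (T : finType) (t0 : T) (x : R) : mean (fun _ : T => x) = x.
Proof.
by rewrite /mean sumr_cstT mulrC mulKf // gt_eqF // (natr_cardT_gt0 t0).
Qed.

Lemma norm_meanB_le (T : finType) (t0 : T) (f g : T -> R) (c : R) :
  (forall t, `|f t - g t| <= c) -> `|mean f - mean g| <= c.
Proof.
move=> fg; have N0 := natr_cardT_gt0 t0.
rewrite /mean -mulrBl -sumrB normrM [`|_^-1|]gtr0_norm ?invr_gt0 // ler_pdivrMr //.
apply: le_trans (ler_norm_sum _ _ _) _.
by rewrite mulrC -sumr_cstT; apply: ler_sum => t _.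
Qed.

Lemma sum_sqr_dev (T : finType) (t0 : T) (h : T -> R) (x : R) :
  \sum_t (h t - x) ^+ 2 =
  \sum_t (h t - mean h) ^+ 2 + #|{: T}|%:R * (mean h - x) ^+ 2.
Proof.
have centered : \sum_t (h t - mean h) = 0.
  by rewrite sumrB sumr_cstT -sum_mean // subrr.
transitivity (\sum_t ((h t - mean h) ^+ 2 + 2 * (mean h - x) * (h t - mean h)
                      + (mean h - x) ^+ 2)).
  by apply: eq_bigr => t _; ring.
by rewrite !big_split /= -mulr_sumr centered mulr0 addr0 sumr_cstT.
Qed.

Lemma chebyshev_card (T : finType) (h : T -> R) (x eta : R) : 0 <= eta ->
  #|[pred t | eta < `|h t - x|]|%:R * eta ^+ 2 <= \sum_t (h t - x) ^+ 2.
Proof.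
move=> eta0; rewrite [leRHS](bigID (fun t => eta < `|h t - x|)) /= -[leLHS]addr0.
apply: lerD; last by rewrite sumr_ge0 // => t _; exact: sqr_ge0.
rewrite mulr_natl -sumr_const; apply: ler_sum => t lt_eta.
by rewrite -[leRHS]real_normK ?num_real // lerXn2r ?nnegrE // ltW.
Qed.

End UniformMean.

Section ColumnBoundedDifferences.
Variables (R : realType) (T : finType) (t0 : T).

Definition col_bounded_diff n m (f : 'M[T]_(n, m) -> R) (c : R) :=
  forall (s s' : 'M[T]_(n, m)) (j0 : 'I_m),
    (forall i j, j != j0 -> s i j = s' i j) -> `|f s - f s'| <= c.

Lemma sum_row_mx n m (F : 'M[T]_(n, 1 + m) -> R) :
  \sum_s F s = \sum_(a : 'M[T]_(n, 1)) \sum_(b : 'M[T]_(n, m)) F (row_mx a b).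
Proof.
rewrite pair_big /= (reindex (fun p => row_mx p.1 p.2)) //=.
exists (fun s => (lsubmx s, rsubmx s)) => [[a b] _ | s _] /=.
  by rewrite row_mxKl row_mxKr.
by rewrite hsubmxK.
Qed.

Lemma natr_card_row_mx n m :
  #|{: 'M[T]_(n, 1 + m)}|%:R = #|{: 'M[T]_(n, 1)}|%:R * #|{: 'M[T]_(n, m)}|%:R :> R.
Proof. by rewrite !card_mx mulnDr muln1 expnD natrM. Qed.

Lemma mean_row_mx n m (f : 'M[T]_(n, 1 + m) -> R) :
  mean f = mean (fun a : 'M[T]_(n, 1) => mean (fun b => f (row_mx a b))).
Proof.
by rewrite /mean sum_row_mx natr_card_row_mx invfM -mulr_suml mulrA mulrAC.
Qed.

Lemma col_bounded_diff_row_mxr n m (f : 'M[T]_(n, 1 + m) -> R) c a :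
  col_bounded_diff f c -> col_bounded_diff (fun b => f (row_mx a b)) c.
Proof.
move=> hf b b' j0 bb'; apply: (hf _ _ (rshift 1 j0)) => i j.
case: (split_ordP j) => k -> {j}; first by rewrite !row_mxEl.
by rewrite !row_mxEr => jk; apply: bb'; apply: contraNneq jk => ->.
Qed.

Lemma norm_mean_row_mxB_le n m (f : 'M[T]_(n, 1 + m) -> R) c a :
  col_bounded_diff f c -> `|mean (fun b => f (row_mx a b)) - mean f| <= c.
Proof.
move=> hf; rewrite mean_row_mx -[X in `|X - _|](mean_cst (const_mx t0 : 'M[T]_(n, 1))).
apply: (norm_meanB_le (const_mx t0)) => a'.
apply: (norm_meanB_le (const_mx t0)) => b.
apply: (hf _ _ (lshift m (0 : 'I_1))) => i j.
case: (split_ordP j) => k -> {j}; last by rewrite !row_mxEr.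
by rewrite (ord1 k) eqxx.
Qed.

(* Efron--Stein: resampling one column at a time, the variance splits into [m] conditional
   variances, each at most [c^2]. *)
Lemma sum_sqr_dev_mean_le n m (f : 'M[T]_(n, m) -> R) (c : R) :
  0 <= c -> col_bounded_diff f c ->
  \sum_s (f s - mean f) ^+ 2 <= m%:R * c ^+ 2 * #|{: 'M[T]_(n, m)}|%:R.
Proof.
move=> c0; elim: m f => [|m IH] f hf.
  have -> : f = fun=> f (const_mx t0).
    by apply: funext => s; congr f; apply/matrixP => i [].
  rewrite (mean_cst (const_mx t0 : 'M[T]_(n, 0))) big1 ?mul0r // => s _.
  by rewrite subrr expr0n.
set Nm := #|{: 'M[T]_(n, m)}|%:R : R.
rewrite sum_row_mx natr_card_row_mx -/Nm.
under eq_bigr => a _ do rewrite (sum_sqr_dev (const_mx t0) (fun b => f (row_mx a b))).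
apply: le_trans (_ : \sum_(a : 'M[T]_(n, 1)) (m%:R * c ^+ 2 * Nm + Nm * c ^+ 2) <= _).
  apply: ler_sum => a _; apply: lerD.
    exact/IH/col_bounded_diff_row_mxr.
  rewrite ler_wpM2l ?ler0n // -real_normK ?num_real // lerXn2r ?nnegrE //.
  exact: norm_mean_row_mxB_le.
by rewrite sumr_cstT -natr1; lra.
Qed.

End ColumnBoundedDifferences.

Section LevyProkhorov.
Variable R : realType.
Local Notation law m := (set 'rV[R]_m -> R).

Definition bounded_monotone m (mu : law m) :=
  (forall U, 0 <= mu U <= 1) /\ (forall U W, U `<=` W -> mu U <= mu W).

Definition lp_admissible m (mu nu : law m) (e : R) :=
  0 < e /\ forall U, mu U <= nu (nbhd_set U e) + e /\ nu U <= mu (nbhd_set U e) + e.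

Lemma empirical_bounded_monotone n m (x : 'I_n -> 'rV[R]_m) :
  bounded_monotone (empirical x).
Proof.
split=> [U | U W UW]; rewrite /empirical.
  rewrite divr_ge0 ?ler0n //=; have [n0|n0] := posnP n.
    by rewrite [in n%:R]n0 invr0 mulr0.
  rewrite ler_pdivrMr ?ltr0n // mul1r ler_nat.
  by apply: leq_trans (max_card _) _; rewrite card_ord.
rewrite ler_wpM2r ?invr_ge0 ?ler0n // ler_nat; apply: subset_leq_card.
by apply/fintype.subsetP => j; rewrite !inE => Uxj; apply: UW.
Qed.

Lemma empirical_le_add_inv n m (x x' : 'I_n -> 'rV[R]_m) (j0 : 'I_n) :
  (forall j, j != j0 -> x j = x' j) ->
  forall U, empirical x U <= empirical x' U + n%:R^-1.
Proof.
move=> xx' U; rewrite /empirical -[X in _ <= _ + X]mul1r -mulrDl natr1.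
rewrite ler_wpM2r ?invr_ge0 ?ler0n // ler_nat.
set P' := [pred j | `[< U (x' j) >]].
apply: (@leq_trans #|[predU pred1 j0 & P']|); last first.
  by rewrite -add1n -(card1 j0) -cardUI leq_addr.
apply: subset_leq_card; apply/fintype.subsetP => j; rewrite !inE.
by have [-> //|/xx' -> /asboolP] := eqVneq j j0.
Qed.

Lemma nbhd_set_le m (U : set 'rV[R]_m) e e' : e <= e' ->
  nbhd_set U e `<=` nbhd_set U e'.
Proof. by move=> ee' x [y Uy xy]; exists y => //; apply: lt_le_trans ee'. Qed.

Lemma dLPC m (mu nu : law m) : dLP mu nu = dLP nu mu.
Proof.
rewrite /dLP; congr inf; apply/seteqP.
by split=> e [e0 h]; split=> // U; have [] := h U.
Qed.

Lemma dLP_ge0 m (mu nu : law m) : 0 <= dLP mu nu.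
Proof.
rewrite /dLP; have [[e adm_e] | none] := pselect (lp_admissible mu nu !=set0).
  by apply: lb_le_inf; [exists e | move=> e' [/ltW]].
rewrite (_ : [set e | _] = set0) ?inf0 //.
by apply/seteqP; split=> // e adm_e; apply: none; exists e.
Qed.

Lemma lp_admissible1 m (mu nu : law m) :
  bounded_monotone mu -> bounded_monotone nu -> lp_admissible mu nu 1.
Proof.
move=> [mu01 _] [nu01 _]; split=> // U.
have /andP[_ ?] := mu01 U; have /andP[_ ?] := nu01 U.
have /andP[? _] := mu01 (nbhd_set U 1); have /andP[? _] := nu01 (nbhd_set U 1).
by split; lra.
Qed.

Lemma dLP_le1 m (mu nu : law m) :
  bounded_monotone mu -> bounded_monotone nu -> dLP mu nu <= 1.
Proof.
move=> bm_mu bm_nu; apply: ge_inf; last exact: lp_admissible1.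
by exists 0 => e [/ltW].
Qed.

(* Enlarging [e] by [d] absorbs a perturbation of size [d] of the second law. *)
Lemma dLP_le_add m (mu nu nu' : law m) (d : R) :
  bounded_monotone mu -> bounded_monotone nu -> bounded_monotone nu' -> 0 <= d ->
  (forall U, nu' U <= nu U + d) -> (forall U, nu U <= nu' U + d) ->
  dLP mu nu' <= dLP mu nu + d.
Proof.
move=> bm_mu bm_nu [_ mono_nu'] d0 nu'_le nu_le; rewrite /dLP -lerBlDr.
apply: lb_le_inf; first by exists 1; exact: lp_admissible1.
move=> e [e0 adm_e]; rewrite lerBlDr; apply: ge_inf; first by exists 0 => e' [/ltW].
split=> [|U]; first lra.
have [mu_le nu_le'] := adm_e U; have ee : e <= e + d by rewrite lerDl.
have sub := nbhd_set_le (U := U) ee.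
have := mono_nu' _ _ sub; have := bm_mu.2 _ _ sub.
have := nu_le (nbhd_set U e); have := nu'_le U.
by split; lra.
Qed.

End LevyProkhorov.

Section Hausdorff.
Variable R : realType.
Local Notation law m := (set 'rV[R]_m -> R).

Lemma inf_le_add (X Y : set R) (d : R) : X !=set0 -> has_lbound Y ->
  (forall x, X x -> exists2 y, Y y & y <= x + d) -> inf Y <= inf X + d.
Proof.
move=> X0 lbY XY; rewrite -lerBlDr; apply: lb_le_inf => // x /XY[y Yy yx].
by rewrite lerBlDr; apply: le_trans yx; apply: ge_inf.
Qed.

Lemma sup_le_add (X Y : set R) (d : R) : Y !=set0 -> has_ubound X ->
  (forall y, Y y -> exists2 x, X x & y <= x + d) -> sup Y <= sup X + d.
Proof.
move=> Y0 ubX YX; apply: ge_sup => // y /YX[x Xx yx].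
by apply: le_trans yx _; rewrite lerD2r; apply: ub_le_sup.
Qed.

Definition lp_excess m (S T : set (law m)) : R :=
  sup [set inf [set dLP mu nu | nu in T] | mu in S].

Lemma dH_lp_excess m (S T : set (law m)) :
  dH S T = Num.max (lp_excess S T) (lp_excess T S).
Proof.
rewrite /dH /lp_excess; congr (Num.max _ (sup _)).
by apply: eq_imagel => nu _; congr inf; apply: eq_imagel => mu _; apply: dLPC.
Qed.

Lemma inf_dLP_itv m (T : set (law m)) (mu nu0 : law m) :
  T nu0 -> bounded_monotone mu -> (forall nu, T nu -> bounded_monotone nu) ->
  0 <= inf [set dLP mu nu | nu in T] <= 1.
Proof.
move=> Tnu0 bm_mu bm_T; apply/andP; split.
  by apply: lb_le_inf => [|_ [nu _ <-]]; [exists (dLP mu nu0), nu0 | exact: dLP_ge0].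
apply: le_trans (dLP_le1 bm_mu (bm_T _ Tnu0)).
by apply: ge_inf; [exists 0 => _ [nu _ <-]; exact: dLP_ge0 | exists nu0].
Qed.

Definition bounded_monotone_family m (S : set (law m)) :=
  S !=set0 /\ forall mu, S mu -> bounded_monotone mu.

Lemma lp_excess_itv m (S T : set (law m)) :
  bounded_monotone_family S -> bounded_monotone_family T -> 0 <= lp_excess S T <= 1.
Proof.
move=> [[mu0 Smu0] bm_S] [[nu0 Tnu0] bm_T].
have itv mu : S mu -> 0 <= inf [set dLP mu nu | nu in T] <= 1.
  by move=> Smu; apply: (inf_dLP_itv Tnu0 (bm_S _ Smu) bm_T).
have /andP[ge0 _] := itv _ Smu0; apply/andP; split.
  apply: le_trans ge0 _; apply: ub_le_sup; last by exists mu0.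
  by exists 1 => _ [mu /itv /andP[_ ?] <-].
apply: ge_sup => [|_ [mu /itv /andP[_ ?] <-] //].
by exists (inf [set dLP mu0 nu | nu in T]), mu0.
Qed.

Lemma lp_excess_le_addr m (S T T' : set (law m)) (d : R) :
  bounded_monotone_family S -> bounded_monotone_family T ->
  (forall nu, T nu -> exists2 nu', T' nu' & forall mu, S mu -> dLP mu nu' <= dLP mu nu + d) ->
  lp_excess S T' <= lp_excess S T + d.
Proof.
move=> [[mu0 Smu0] bm_S] [[nu0 Tnu0] bm_T] TT'.
apply: sup_le_add => [|| _ [mu Smu <-]].
- by exists (inf [set dLP mu0 nu | nu in T']), mu0.
- by exists 1 => _ [mu Smu <-]; have /andP[] := inf_dLP_itv Tnu0 (bm_S _ Smu) bm_T.
exists (inf [set dLP mu nu | nu in T]); first by exists mu.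
apply: inf_le_add => [|| _ [nu Tnu <-]].
- by exists (dLP mu nu0), nu0.
- by exists 0 => _ [nu _ <-]; exact: dLP_ge0.
have [nu' T'nu' le_nu'] := TT' nu Tnu.
by exists (dLP mu nu'); [exists nu' | exact: le_nu'].
Qed.

Lemma lp_excess_le_addl m (S T T' : set (law m)) (d : R) :
  bounded_monotone_family S -> bounded_monotone_family T -> T' !=set0 ->
  (forall nu', T' nu' -> exists2 nu, T nu & forall mu, S mu -> dLP nu' mu <= dLP nu mu + d) ->
  lp_excess T' S <= lp_excess T S + d.
Proof.
move=> [[mu0 Smu0] bm_S] [_ bm_T] [nu0' T'nu0'] T'T.
apply: sup_le_add => [|| _ [nu' T'nu' <-]].
- by exists (inf [set dLP nu0' mu | mu in S]), nu0'.
- by exists 1 => _ [nu Tnu <-]; have /andP[] := inf_dLP_itv Smu0 (bm_T _ Tnu) bm_S.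
have [nu Tnu le_nu] := T'T nu' T'nu'.
exists (inf [set dLP nu mu | mu in S]); first by exists nu.
apply: inf_le_add => [|| _ [mu Smu <-]].
- by exists (dLP nu mu0), mu0.
- by exists 0 => _ [mu _ <-]; exact: dLP_ge0.
by exists (dLP nu' mu); [exists mu | exact: le_nu].
Qed.

Lemma dH_itv m (S T : set (law m)) :
  bounded_monotone_family S -> bounded_monotone_family T -> 0 <= dH S T <= 1.
Proof.
move=> bmS bmT; rewrite dH_lp_excess.
have /andP[ST0 ST1] := lp_excess_itv bmS bmT.
have /andP[TS0 TS1] := lp_excess_itv bmT bmS.
by rewrite ge_max ST1 TS1 le_max ST0.
Qed.

Lemma dH_le_add m (S T T' : set (law m)) (d : R) :
  bounded_monotone_family S -> bounded_monotone_family T -> T' !=set0 ->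
  (forall nu, T nu -> exists2 nu', T' nu' & forall mu, S mu -> dLP mu nu' <= dLP mu nu + d) ->
  (forall nu', T' nu' -> exists2 nu, T nu & forall mu, S mu -> dLP mu nu' <= dLP mu nu + d) ->
  dH S T' <= dH S T + d.
Proof.
move=> bmS bmT T'0 TT' T'T; rewrite !dH_lp_excess ge_max; apply/andP; split.
  apply: le_trans (lp_excess_le_addr bmS bmT TT') _.
  by rewrite lerD2r le_max lexx.
apply: le_trans (lp_excess_le_addl bmS bmT T'0 _) _.
  move=> nu' /T'T[nu Tnu le_nu]; exists nu => // mu Smu.
  by rewrite dLPC [dLP nu _]dLPC; exact: le_nu.
by rewrite lerD2r le_max lexx orbT.
Qed.

End Hausdorff.

Section Profiles.
Variable R : realType.

Lemma Sk_bounded_monotone_family n (A : 'M[R]_n) k : bounded_monotone_family (@Sk R n A k).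
Proof.
split=> [|_ [V _ <-]]; last exact: empirical_bounded_monotone.
by exists (empirical (profile_pt A 0)), 0 => // i j; rewrite mxE lerN10 ler01.
Qed.

Lemma profile_pt_eq n (B B' : 'M[R]_n) (j0 : 'I_n) k (V : 'M[R]_(k, n)) :
  (forall i j, j != j0 -> B i j = B' i j) ->
  forall j, j != j0 -> profile_pt B V j = profile_pt B' V j.
Proof.
move=> BB' j jj0; congr (row_mx _ (_^T)); apply/matrixP => i l.
by rewrite !mxE; apply: eq_bigr => t _; rewrite BB'.
Qed.

Lemma dLP_profile_le_add n (B B' : 'M[R]_n) (j0 : 'I_n) k (V : 'M[R]_(k, n)) mu :
  (forall i j, j != j0 -> B i j = B' i j) -> bounded_monotone mu ->
  dLP mu (empirical (profile_pt B' V)) <= dLP mu (empirical (profile_pt B V)) + n%:R^-1.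
Proof.
move=> BB' bm_mu; apply: dLP_le_add; rewrite ?invr_ge0 ?ler0n //;
  try exact: empirical_bounded_monotone.
- by apply: (empirical_le_add_inv (j0 := j0)) => j /(profile_pt_eq V BB') ->.
- by apply: (empirical_le_add_inv (j0 := j0)) => j /(profile_pt_eq V BB').
Qed.

Lemma dH_Sk_le_add n (A B B' : 'M[R]_n) (j0 : 'I_n) k :
  (forall i j, j != j0 -> B i j = B' i j) ->
  dH (@Sk R n A k) (@Sk R n B' k) <= dH (@Sk R n A k) (@Sk R n B k) + n%:R^-1.
Proof.
move=> BB'; apply: dH_le_add; try exact: Sk_bounded_monotone_family.
- exact: (Sk_bounded_monotone_family B' k).1.
- move=> _ [V V11 <-]; exists (empirical (profile_pt B' V)); first by exists V.
  by move=> _ [W _ <-]; exact: dLP_profile_le_add BB' (empirical_bounded_monotone _).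
- move=> _ [V V11 <-]; exists (empirical (profile_pt B V)); first by exists V.
  by move=> _ [W _ <-]; exact: dLP_profile_le_add BB' (empirical_bounded_monotone _).
Qed.

End Profiles.

Section WeightedSeries.
Variable R : realType.

Lemma cvg_series_halfpow : series (fun k => (2 : R) ^- k.+1) @ \oo --> (1 : R).
Proof.
have -> : (fun k => (2 : R) ^- k.+1) = geometric 2^-1 2^-1.
  by apply: funext => k; rewrite /= -exprVn exprS.
have half : 1 - 2^-1 = 2^-1 :> R by rewrite {1}(splitr 1) div1r addrK.
rewrite -[X in _ --> X](@divff _ 2^-1) // -[X in _ / X]half.
by apply: cvg_geometric_series; rewrite ger0_norm // invf_lt1 // ltr1n.
Qed.

Lemma lim_series_halfpow_le_add (d d' : nat -> R) (e : R) :
  (forall k, 0 <= d k <= 1) -> (forall k, 0 <= d' k <= 1) ->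
  (forall k, d' k <= d k + e) ->
  limn (series (fun k => (2 : R) ^- k.+1 * d' k)) <=
  limn (series (fun k => (2 : R) ^- k.+1 * d k)) + e.
Proof.
move=> d01 d'01 d'd.
have w_ge0 k : 0 <= (2 : R) ^- k.+1 by rewrite invr_ge0 exprn_ge0.
have cvg_wd (f : nat -> R) : (forall k, 0 <= f k <= 1) ->
    cvgn (series (fun k => (2 : R) ^- k.+1 * f k)).
  move=> f01; apply: series_le_cvg (cvgP _ cvg_series_halfpow) => k.
  - by have /andP[f0 _] := f01 k; exact: mulr_ge0.
  - exact: w_ge0.
  - by have /andP[_ f1] := f01 k; rewrite ler_piMr.
pose g k := (2 : R) ^- k.+1 * d k + e * (2 : R) ^- k.+1.
have cvg_g : series g @ \oo --> limn (series (fun k => (2 : R) ^- k.+1 * d k)) + e.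
  have -> : series g = series (fun k => (2 : R) ^- k.+1 * d k)
                      + cst e \* series (fun k => (2 : R) ^- k.+1).
    by apply: funext => N; rewrite /series /= big_split /= -mulr_sumr.
  rewrite -[X in _ --> _ + X]mulr1; apply: cvgD; first exact: cvg_wd.
  exact: cvgM (cvg_cst e) cvg_series_halfpow.
rewrite -(cvg_lim _ cvg_g) //; apply: lim_series_le => [|| k].
- exact: cvg_wd.
- exact: cvgP cvg_g.
by rewrite /g (mulrC e) -mulrDr ler_wpM2l.
Qed.

End WeightedSeries.

Section Concentration.
Variable R : realType.

Lemma dM_le_add n (A B B' : 'M[R]_n) (j0 : 'I_n) :
  (forall i j, j != j0 -> B i j = B' i j) -> dM A B' <= dM A B + n%:R^-1.
Proof.
move=> BB'; apply: lim_series_halfpow_le_add => k; last exact: dH_Sk_le_add BB'.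
- exact: dH_itv (Sk_bounded_monotone_family A k.+1) (Sk_bounded_monotone_family B k.+1).
- exact: dH_itv (Sk_bounded_monotone_family A k.+1) (Sk_bounded_monotone_family B' k.+1).
Qed.

Lemma dM_signmx_col_bounded_diff n (A : 'M[R]_n) :
  col_bounded_diff (fun s => dM A (signmx R s)) n%:R^-1.
Proof.
move=> s s' j0 ss'.
have eq_off_j0 (t t' : 'M[bool]_n) : (forall i j, j != j0 -> t i j = t' i j) ->
    forall i j, j != j0 -> signmx R t i j = signmx R t' i j.
  by move=> tt' i j jj0; rewrite !mxE tt'.
have le1 := dM_le_add A (eq_off_j0 _ _ ss').
have le2 := dM_le_add A (eq_off_j0 _ _ (fun i j jj0 => esym (ss' i j jj0))).
by rewrite ler_distl lerBlDr; apply/andP; split; [exact: le1 | exact: le2].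
Qed.

Lemma P_dev_le n (A : 'M[R]_n) (eta : R) : (0 < n)%N -> 0 < eta ->
  P_dev A eta <= n%:R^-1 / eta ^+ 2.
Proof.
move=> n0 eta0; have N0 := natr_cardT_gt0 R (0 : 'M[bool]_n).
have inv_n_ge0 : 0 <= n%:R^-1 :> R by rewrite invr_ge0 ler0n.
have var := sum_sqr_dev_mean_le true inv_n_ge0 (dM_signmx_col_bounded_diff A).
have cheb := chebyshev_card (fun s => dM A (signmx R s)) (E_dM A) (ltW eta0).
rewrite /P_dev ler_pdivrMr // mulrAC ler_pdivlMr ?exprn_gt0 //.
apply: le_trans cheb (le_trans var _).
by rewrite expr2 mulrA mulfV ?mul1r // pnatr_eq0 -lt0n.
Qed.

End Concentration.

Theorem lemma11p2 (R : realType) (M : forall n : nat, 'M[R]_n)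
  (hM : forall n, inMn (M n)) (eta : R) (heta : 0 < eta) :
  (fun n => P_dev (M n) eta) @ \oo --> (0 : R).
Proof.
have lim_bound : (fun n => n%:R^-1 / eta ^+ 2) @ \oo --> (0 : R).
  have := cvgMr_tmp (b := (eta ^+ 2)^-1) (@cvg_harmonic R); rewrite mul0r => lim.
  by rewrite -cvg_shiftS; exact: lim.
apply: (squeeze_cvgr _ (cvg_cst 0) lim_bound).
near=> n; rewrite /P_dev divr_ge0 ?ler0n //= P_dev_le //.
by near: n; exists 1%N.
Unshelve. all: by end_near.
Qed.
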